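(* Let $X$ and $Y$ be separable metrizable spaces and let $f : X \to Y$ be an open-LC function from $X$ onto $Y$ such that $f^{-1}(y)$ is compact for every $y \in Y$. Then there are subsets $Y_0, Y_1, Y_2, \dots$ of $Y$ with $Y = \bigcup_{n\ge 0} Y_n$ such that for every $n \ge 1$ the restriction $f|_{f^{-1}(Y_n)} : f^{-1}(Y_n) \to Y_n$ is an open function, and the restriction $f|_{f^{-1}(Y_0)} : f^{-1}(Y_0) \to Y_0$ is a closed function.
   Context: A subset of a topological space is an LC-set (locally closed set) if it is the intersection of an open set and a closed set. A function $f : X \to Y$ (not necessarily continuous) is open-LC if for every open $U \subset X$ the image $f(U)$ is an LC-set in $Y$. A function is open (resp. closed) if it maps open (resp. closed) sets to open (resp. closed) sets of its image space. *)

From Stdlib Require Import Reals List.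
Open Scope R_scope.

Record Topology (T : Type) : Type := {
  is_open : (T -> Prop) -> Prop;
  open_full : is_open (fun _ => True);
  open_inter : forall U V, is_open U -> is_open V -> is_open (fun x => U x /\ V x);
  open_union : forall F : (T -> Prop) -> Prop,
      (forall U, F U -> is_open U) -> is_open (fun x => exists U, F U /\ U x)
}.
Arguments is_open {T} t U.

Definition is_closed {T} (t : Topology T) (F : T -> Prop) : Prop :=
  is_open t (fun x => ~ F x).

Definition is_metric {T} (d : T -> T -> R) : Prop :=
  (forall x y, 0 <= d x y) /\
  (forall x y, d x y = 0 <-> x = y) /\
  (forall x y, d x y = d y x) /\
  (forall x y z, d x z <= d x y + d y z).

Definition metric_open {T} (d : T -> T -> R) (U : T -> Prop) : Prop :=
  forall x, U x -> exists eps, 0 < eps /\ forall y, d x y < eps -> U y.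

Definition metrizable {T} (t : Topology T) : Prop :=
  exists d : T -> T -> R, is_metric d /\
    forall U, is_open t U <-> metric_open d U.

Definition countable_set {T} (D : T -> Prop) : Prop :=
  exists g : T -> nat, forall x y, D x -> D y -> g x = g y -> x = y.

Definition dense {T} (t : Topology T) (D : T -> Prop) : Prop :=
  forall U, is_open t U -> (exists x, U x) -> exists x, U x /\ D x.

Definition separable {T} (t : Topology T) : Prop :=
  exists D : T -> Prop, countable_set D /\ dense t D.

(* Compactness of a subset (equivalently, of it as a subspace) *)
Definition compact_set {T} (t : Topology T) (K : T -> Prop) : Prop :=
  forall C : (T -> Prop) -> Prop,
    (forall U, C U -> is_open t U) ->
    (forall x, K x -> exists U, C U /\ U x) ->
    exists l : list (T -> Prop),
      (forall U, In U l -> C U) /\ (forall x, K x -> exists U, In U l /\ U x).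

Definition image {X Y} (f : X -> Y) (A : X -> Prop) : Y -> Prop :=
  fun y => exists x, A x /\ f x = y.
Definition preimage {X Y} (f : X -> Y) (B : Y -> Prop) : X -> Prop :=
  fun x => B (f x).

Definition LC_set {T} (t : Topology T) (S : T -> Prop) : Prop :=
  exists O F, is_open t O /\ is_closed t F /\ forall x, S x <-> (O x /\ F x).

Definition open_LC {X Y} (tX : Topology X) (tY : Topology Y) (f : X -> Y) : Prop :=
  forall U, is_open tX U -> LC_set tY (image f U).

Definition rel_open {T} (t : Topology T) (A V : T -> Prop) : Prop :=
  exists W, is_open t W /\ forall x, V x <-> (W x /\ A x).
Definition rel_closed {T} (t : Topology T) (A V : T -> Prop) : Prop :=
  exists F, is_closed t F /\ forall x, V x <-> (F x /\ A x).

(* The restriction f|_{f^{-1}(B)} : f^{-1}(B) -> B is open / closed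
   (w.r.t. subspace topologies). *)
Definition restr_open {X Y} (tX : Topology X) (tY : Topology Y) (f : X -> Y)
  (B : Y -> Prop) : Prop :=
  forall U, (forall x, U x -> B (f x)) -> rel_open tX (preimage f B) U ->
    rel_open tY B (image f U).
Definition restr_closed {X Y} (tX : Topology X) (tY : Topology Y) (f : X -> Y)
  (B : Y -> Prop) : Prop :=
  forall F, (forall x, F x -> B (f x)) -> rel_closed tX (preimage f B) F ->
    rel_closed tY B (image f F).

(* An open-LC map [f] splits [Y] along the sets [cl f(W) \ f(W)], [W] open: each of them is
   closed, and over it [f] is open, because a relatively open [W' ∩ f^-1(E)] maps onto
   [E \ (cl f(W' ∪ W) \ f(W' ∪ W))].  A metrizable separable [X] has a countable family of
   open sets separating every compact set from every disjoint closed set (complements of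
   finite unions of rational closed balls about a countable dense set).  Off the
   countably many pieces attached to this family, [f] is closed: a point of [cl f(F)] whose
   compact fibre misses the closed set [F] is separated from [F] by some member [W] of the
   family, and then lies in [cl f(W) \ f(W)]. *)
From Stdlib Require Import Reals List.
From Stdlib Require Import Cantor Classical FunctionalExtensionality PropExtensionality Lra.
Open Scope R_scope.

Lemma is_open_ext {T} (t : Topology T) (P Q : T -> Prop) :
  (forall x, P x <-> Q x) -> is_open t P -> is_open t Q.
Proof.
  intros HPQ HP. replace Q with P; [exact HP|].
  apply functional_extensionality; intro x; apply propositional_extensionality, HPQ.
Qed.

Lemma is_open_or {T} (t : Topology T) (U V : T -> Prop) :
  is_open t U -> is_open t V -> is_open t (fun x => U x \/ V x).
Proof.
  intros HU HV.
  apply (is_open_ext t (fun x => exists S, (S = U \/ S = V) /\ S x)).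
  - intro x; split.
    + intros [S [[-> | ->] HS]]; auto.
    + intros [Hx | Hx]; [exists U | exists V]; auto.
  - apply open_union. intros S [-> | ->]; assumption.
Qed.

Lemma is_open_list_inter {T A} (t : Topology T) (P : A -> T -> Prop) (l : list A) :
  (forall a, In a l -> is_open t (P a)) -> is_open t (fun x => forall a, In a l -> P a x).
Proof.
  induction l as [|a l IH]; intros Hl.
  - apply (is_open_ext t (fun _ => True)); [|apply open_full].
    intro x; split; [intros _ b []| auto].
  - apply (is_open_ext t (fun x => P a x /\ forall b, In b l -> P b x)).
    + intro x; split.
      * intros [Ha Hb] b [<- | Hin]; auto.
      * intro H; split; [apply H; left | intros b Hb; apply H; right]; auto.
    + apply open_inter; [apply Hl; left; reflexivity|].
      apply IH; intros b Hb; apply Hl; right; exact Hb.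
Qed.

Definition closure {T} (t : Topology T) (S : T -> Prop) (y : T) : Prop :=
  forall N, is_open t N -> N y -> exists z, N z /\ S z.

Lemma closure_closed {T} (t : Topology T) (S : T -> Prop) : is_closed t (closure t S).
Proof.
  apply (is_open_ext t (fun y => exists U, (is_open t U /\ forall z, U z -> ~ S z) /\ U y)).
  - intro y; split.
    + intros [U [[HU HUS] HUy]] Hcl.
      destruct (Hcl U HU HUy) as [z [HUz HSz]]. exact (HUS z HUz HSz).
    + intro Hn. apply not_all_ex_not in Hn as [N HN].
      apply imply_to_and in HN as [HN HN']. apply imply_to_and in HN' as [HNy HN'].
      exists N. repeat split; auto.
      intros z HNz HSz. apply HN'. eauto.
  - apply open_union. intros U [HU _]; exact HU.
Qed.

Lemma closure_mono {T} (t : Topology T) (A B : T -> Prop) (y : T) :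
  (forall z, A z -> B z) -> closure t A y -> closure t B y.
Proof.
  intros HAB Hcl N HN HNy. destruct (Hcl N HN HNy) as [z [? ?]]; eauto.
Qed.

Lemma subset_closure {T} (t : Topology T) (S : T -> Prop) (y : T) : S y -> closure t S y.
Proof. intros Sy N _ HNy. eauto. Qed.

Definition remainder {T} (t : Topology T) (L : T -> Prop) (y : T) : Prop :=
  closure t L y /\ ~ L y.

Lemma remainder_closed {T} (t : Topology T) (L : T -> Prop) :
  LC_set t L -> is_closed t (remainder t L).
Proof.
  intros [O [F [HO [HF HL]]]].
  apply (is_open_ext t (fun y => O y \/ ~ closure t L y)).
  - intro y; split.
    + intros [Oy | Hncl] [Hcl HnL]; [|contradiction].
      apply HnL, HL. split; [exact Oy|].
      apply NNPP; intro HnF.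
      destruct (Hcl _ HF HnF) as [z [HnFz Lz]]. apply HnFz, HL, Lz.
    + intro Hnrem. destruct (classic (closure t L y)) as [Hcl | Hncl]; [left | right; exact Hncl].
      apply NNPP; intro HnO. apply Hnrem. split; [exact Hcl|].
      intro Ly. apply HnO, HL, Ly.
  - apply is_open_or; [exact HO | apply closure_closed].
Qed.

Lemma restr_open_remainder {X Y} (tX : Topology X) (tY : Topology Y) (f : X -> Y)
  (hf : open_LC tX tY f) (W : X -> Prop) (HW : is_open tX W) :
  restr_open tX tY f (remainder tY (image f W)).
Proof.
  intros U HU [W' [HW' HUW]].
  set (L := image f (fun x => W' x \/ W x)).
  exists (fun y => ~ remainder tY L y).
  split; [apply remainder_closed, hf, is_open_or; assumption|].
  intro y; split.
  - intros [x [Ux <-]]. split; [|apply HU, Ux].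
    intros [_ HnL]. apply HnL. exists x. split; [left; apply HUW, Ux | reflexivity].
  - intros [Hnrem [Hcl HnfW]].
    assert (Ly : L y).
    { apply NNPP; intro HnL. apply Hnrem. split; [|exact HnL].
      apply (closure_mono tY (image f W)); [|exact Hcl].
      intros z [x [Wx <-]]. exists x. split; [right |]; auto. }
    destruct Ly as [x [[W'x | Wx] <-]].
    + exists x. split; [apply HUW; split; [exact W'x | split]|]; auto.
    + exfalso. apply HnfW. exists x; auto.
Qed.

Definition separates_compact_closed {T I} (t : Topology T) (W : I -> T -> Prop) : Prop :=
  forall K C, compact_set t K -> is_closed t C -> (forall x, K x -> ~ C x) ->
    exists i, (forall x, C x -> W i x) /\ (forall x, K x -> ~ W i x).

Lemma restr_closed_off_remainders {X Y I} (tX : Topology X) (tY : Topology Y) (f : X -> Y)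
  (W : I -> X -> Prop) (hW : separates_compact_closed tX W)
  (hfib : forall y, compact_set tX (preimage f (fun z => z = y))) :
  restr_closed tX tY f (fun y => forall i, ~ remainder tY (image f (W i)) y).
Proof.
  intros F HF [C [HC HFC]].
  exists (closure tY (image f F)). split; [apply closure_closed|].
  intro y; split.
  - intros [x [Fx <-]]. split; [apply subset_closure; exists x; auto | apply HF, Fx].
  - intros [Hcl Hoff]. apply NNPP; intro HnfF.
    destruct (hW (preimage f (fun z => z = y)) C (hfib y) HC) as [i [HCW HKW]].
    { intros x Hfx Cx. apply HnfF. exists x. split; [|exact Hfx].
      apply HFC. split; [exact Cx|]. unfold preimage in *. rewrite Hfx. exact Hoff. }
    apply (Hoff i). split.
    + apply (closure_mono tY (image f F)); [|exact Hcl].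
      intros z [x [Fx <-]]. exists x. split; [apply HCW, HFC, Fx | reflexivity].
    + intros [x [Wx Hfx]]. exact (HKW x Hfx Wx).
Qed.

Definition inv_succ (k : nat) : R := / INR (S k).

Lemma inv_succ_pos (k : nat) : 0 < inv_succ k.
Proof. apply Rinv_0_lt_compat, lt_0_INR, Nat.lt_0_succ. Qed.

Lemma inv_succ_lt (e : R) : 0 < e -> exists k, inv_succ k < e.
Proof.
  intro He. destruct (archimed_cor1 e He) as [[|k] [Hk Hpos]].
  - exfalso; inversion Hpos.
  - exists k; exact Hk.
Qed.

Lemma list_choice {A B} (Q : B -> Prop) (P : A -> B -> Prop) (l : list A) :
  (forall a, In a l -> exists b, Q b /\ P a b) ->
  exists l', (forall b, In b l' -> Q b) /\ (forall a, In a l -> exists b, In b l' /\ P a b).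
Proof.
  induction l as [|a l IH]; intro Hl.
  - exists nil. split; intros ? [].
  - destruct IH as [l' [HQ HP]]; [intros a' Ha'; apply Hl; right; exact Ha'|].
    destruct (Hl a (or_introl eq_refl)) as [b [Qb Pab]].
    exists (b :: l'). split.
    + intros b' [<- | Hb']; auto.
    + intros a' [<- | Ha'].
      * exists b. split; [left|]; auto.
      * destruct (HP a' Ha') as [b' [Hb' Pb']]. exists b'. split; [right|]; auto.
Qed.

Section MetricSeparation.

Variables (X : Type) (t : Topology X) (d : X -> X -> R) (D : X -> Prop) (g : X -> nat).
Hypothesis hd : is_metric d.
Hypothesis ht : forall U, is_open t U <-> metric_open d U.
Hypothesis hg : forall x y, D x -> D y -> g x = g y -> x = y.
Hypothesis hdense : dense t D.

(* [(k, m)] codes the closed ball of radius [1/(m+1)] about the point of [D] numbered [k]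
   by [g]; it is empty if [g] misses [k]. *)
Definition outside_ball (p : nat * nat) (x : X) : Prop :=
  forall s, D s -> g s = fst p -> inv_succ (snd p) < d s x.

Definition outside_balls (l : list (nat * nat)) (x : X) : Prop :=
  forall p, In p l -> outside_ball p x.

Lemma outside_ball_open (p : nat * nat) : is_open t (outside_ball p).
Proof.
  destruct hd as [_ [_ [hsym htri]]].
  apply ht. intros x Hx.
  destruct (classic (exists s, D s /\ g s = fst p)) as [[s [Ds Hgs]] | Hno].
  - exists (d s x - inv_succ (snd p)). split; [specialize (Hx s Ds Hgs); lra|].
    intros y Hy s' Ds' Hgs'.
    assert (s' = s) as -> by (apply hg; congruence).
    pose proof (htri s y x). rewrite (hsym y x) in *. lra.
  - exists 1. split; [lra|]. intros y _ s Ds Hgs. exfalso; eauto.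
Qed.

Lemma outside_balls_open (l : list (nat * nat)) : is_open t (outside_balls l).
Proof. apply is_open_list_inter. intros p _. apply outside_ball_open. Qed.

Lemma metric_ball_open (c : X) (r : R) : is_open t (fun z => d c z < r).
Proof.
  destruct hd as [_ [_ [_ htri]]].
  apply ht. intros z Hz. exists (r - d c z). split; [lra|].
  intros w Hw. pose proof (htri c z w). lra.
Qed.

Lemma small_ball_avoiding (C : X -> Prop) (x : X) : is_closed t C -> ~ C x ->
  exists s k, D s /\ d s x < inv_succ k /\ forall z, d s z <= inv_succ k -> ~ C z.
Proof.
  destruct hd as [_ [hzero [hsym htri]]].
  intros HC Cx.
  destruct (proj1 (ht _) HC x Cx) as [e [He Hball]].
  destruct (inv_succ_lt (e / 2)) as [k Hk]; [lra|].
  pose proof (inv_succ_pos k) as Hk_pos.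
  destruct (hdense (fun z => d x z < inv_succ k)) as [s [Hxs Ds]].
  - apply metric_ball_open.
  - exists x. rewrite (proj2 (hzero x x) eq_refl). exact Hk_pos.
  - exists s, k. split; [exact Ds|]. rewrite hsym. split; [exact Hxs|].
    intros z Hz. apply Hball. pose proof (htri x s z). lra.
Qed.

Lemma outside_balls_separate : separates_compact_closed t outside_balls.
Proof.
  intros K C HK HC HKC.
  set (avoids p := forall s, D s -> g s = fst p -> forall z, d s z <= inv_succ (snd p) -> ~ C z).
  set (inside U p := forall z, U z -> ~ outside_ball p z).
  destruct (HK (fun U => exists s k, D s /\ U = (fun z => d s z < inv_succ k) /\
                                   forall z, d s z <= inv_succ k -> ~ C z))
    as [Us [HUs HKUs]].
  - intros U [s [k [_ [-> _]]]]. apply metric_ball_open.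
  - intros x Kx. destruct (small_ball_avoiding C x HC (HKC x Kx)) as [s [k [Ds [Hx Hs]]]].
    exists (fun z => d s z < inv_succ k). split; [exists s, k|]; auto.
  - destruct (list_choice avoids inside Us) as [l [Havoid Hinside]].
    + intros U HU. destruct (HUs U HU) as [s [k [Ds [-> Hs]]]].
      exists (g s, k). split.
      * intros s' Ds' Hgs'. assert (s' = s) as -> by (apply hg; auto). exact Hs.
      * intros z Hz Hout. specialize (Hout s Ds eq_refl). simpl in Hout. lra.
    + exists l. split.
      * intros x Cx p Hp s Ds Hgs. apply Rnot_le_lt. intro Hle. exact (Havoid p Hp s Ds Hgs x Hle Cx).
      * intros x Kx Hout. destruct (HKUs x Kx) as [U [HU Ux]].
        destruct (Hinside U HU) as [p [Hp Hin]]. exact (Hin x Ux (Hout p Hp)).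
Qed.

End MetricSeparation.

Fixpoint encode_list (l : list (nat * nat)) : nat :=
  match l with
  | nil => 0%nat
  | p :: l' => S (Cantor.to_nat (Cantor.to_nat p, encode_list l'))
  end.

Lemma encode_list_inj (l1 l2 : list (nat * nat)) : encode_list l1 = encode_list l2 -> l1 = l2.
Proof.
  revert l2; induction l1 as [|p l1 IH]; intros [|q l2] H; try discriminate; [reflexivity|].
  apply eq_add_S, (f_equal Cantor.of_nat) in H. rewrite !Cantor.cancel_of_to in H.
  injection H as Hpq Hl. apply (f_equal Cantor.of_nat) in Hpq. rewrite !Cantor.cancel_of_to in Hpq.
  subst q. f_equal. apply IH, Hl.
Qed.

Lemma separates_compact_closed_reindex {T I} (t : Topology T) (W : I -> T -> Prop)
  (e : I -> nat) : (forall i j, e i = e j -> i = j) -> separates_compact_closed t W ->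
  separates_compact_closed t (fun n x => exists i, e i = n /\ W i x).
Proof.
  intros He hW K C HK HC HKC.
  destruct (hW K C HK HC HKC) as [i [HCW HKW]].
  exists (e i). split.
  - intros x Cx. exists i. auto.
  - intros x Kx [j [Hj Wx]]. rewrite (He j i Hj) in Wx. exact (HKW x Kx Wx).
Qed.

Lemma separating_open_sequence {X} (t : Topology X) : metrizable t -> separable t ->
  exists W : nat -> X -> Prop, (forall n, is_open t (W n)) /\ separates_compact_closed t W.
Proof.
  intros [d [hd ht]] [D [[g hg] hdense]].
  exists (fun n x => exists l, encode_list l = n /\ outside_balls X d D g l x). split.
  - intro n.
    apply (is_open_ext t (fun x => exists U, (exists l, encode_list l = n /\
                                               U = outside_balls X d D g l) /\ U x)).
    + intro x; split.
      * intros [U [[l [Hl ->]] Ux]]. eauto.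
      * intros [l [Hl Hx]]. eauto.
    + apply open_union. intros U [l [_ ->]]. apply outside_balls_open; assumption.
  - apply separates_compact_closed_reindex; [exact encode_list_inj|].
    apply outside_balls_separate; assumption.
Qed.

Theorem corollary1 (X Y : Type) (tX : Topology X) (tY : Topology Y)
  (hXm : metrizable tX) (hXs : separable tX)
  (hYm : metrizable tY) (hYs : separable tY)
  (f : X -> Y) (hf : open_LC tX tY f)
  (hsurj : forall y, exists x, f x = y)
  (hfib : forall y, compact_set tX (preimage f (fun z => z = y))) :
  exists Yn : nat -> (Y -> Prop),
    (forall y, exists n, Yn n y) /\
    (forall n, (1 <= n)%nat -> restr_open tX tY f (Yn n)) /\
    restr_closed tX tY f (Yn 0%nat).
Proof.
  destruct (separating_open_sequence tX hXm hXs) as [W [HWopen HWsep]].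
  set (E k := remainder tY (image f (W k))).
  exists (fun n => match n with
                   | O => fun y => forall k, ~ E k y
                   | S k => E k
                   end).
  split; [|split].
  - intro y. destruct (classic (exists k, E k y)) as [[k Hk] | Hno].
    + exists (S k). exact Hk.
    + exists O. intros k Hk. apply Hno. eauto.
  - intros [|k] Hk; [inversion Hk | apply restr_open_remainder; auto].
  - apply restr_closed_off_remainders; assumption.
Qed.
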